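(* Let $S,T$ be left inverse semi-braces and $\sigma:T\to\mathrm{Aut}(S)$ a homomorphism from $(T,\cdot)$ into the automorphism group of the left inverse semi-brace $S$; write ${}^ua=\sigma(u)(a)$. Then $S\times T$ with $$(a,u)+(b,v)=(a+b,\,u+v),\qquad (a,u)(b,v)=(a\,{}^ub,\,uv)$$ for all $(a,u),(b,v)\in S\times T$, is a left inverse semi-brace (the semidirect product $S\rtimes_\sigma T$).
   Context: An inverse semigroup is a semigroup $(S,\cdot)$ in which for each $a$ there is a unique $a^{-1}$ with $aa^{-1}a=a$, $a^{-1}aa^{-1}=a^{-1}$. A left inverse semi-brace is a triple $(S,+,\cdot)$ with $(S,+)$ a semigroup (not necessarily commutative), $(S,\cdot)$ an inverse semigroup and $a(b+c)=ab+a(a^{-1}+c)$ for all $a,b,c\in S$. An automorphism of the left inverse semi-brace $S$ is a bijection $S\to S$ preserving both $+$ and $\cdot$. *)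

From Stdlib Require Import FunctionalExtensionality.

Definition associative {S : Type} (op : S -> S -> S) : Prop :=
  forall a b c, op a (op b c) = op (op a b) c.

Definition is_inv {S : Type} (mul : S -> S -> S) (a b : S) : Prop :=
  mul (mul a b) a = a /\ mul (mul b a) b = b.

Definition inverse_semigroup {S : Type} (mul : S -> S -> S) : Prop :=
  associative mul /\
  forall a, exists b, is_inv mul a b /\ forall b', is_inv mul a b' -> b' = b.

Definition left_inverse_semi_brace {S : Type} (add mul : S -> S -> S) : Prop :=
  associative add /\ inverse_semigroup mul /\
  forall a a' b c, is_inv mul a a' ->
    mul a (add b c) = add (mul a b) (mul a (add a' c)).

Definition semi_brace_aut {S : Type} (add mul : S -> S -> S) (f : S -> S) : Prop :=
  (exists g : S -> S, (forall x, g (f x) = x) /\ (forall y, f (g y) = y)) /\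
  (forall a b, f (add a b) = add (f a) (f b)) /\
  (forall a b, f (mul a b) = mul (f a) (f b)).

Definition sd_add {S T : Type} (addS : S -> S -> S) (addT : T -> T -> T)
  (x y : S * T) : S * T := (addS (fst x) (fst y), addT (snd x) (snd y)).

Definition sd_mul {S T : Type} (mulS : S -> S -> S) (mulT : T -> T -> T)
  (sigma : T -> S -> S) (x y : S * T) : S * T :=
  (mulS (fst x) (sigma (snd x) (fst y)), mulT (snd x) (snd y)).

(* The heart of the matter is
   the inverse: [(a,u)] has the unique inverse [(sigma u' a', u')], where [a'],
   [u'] are the inverses of [a], [u].  This works because the idempotent [uu']
   acts trivially: [sigma (uu')] is injective and idempotent under composition.
   Once the inverse is known, the brace law of [S x T] splits into the brace
   laws of [S] (at [sigma u b], [sigma u c]) and of [T]. *)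

Lemma is_inv_sym {X : Type} (mul : X -> X -> X) (a b : X) :
  is_inv mul a b -> is_inv mul b a.
Proof. intros [H1 H2]. split; assumption. Qed.

Lemma is_inv_idempotent {X : Type} (mul : X -> X -> X) (a b : X) :
  associative mul -> is_inv mul a b -> mul (mul a b) (mul a b) = mul a b.
Proof. intros Hassoc [H1 _]. rewrite Hassoc, H1. reflexivity. Qed.

Lemma inverse_semigroup_inv_unique {X : Type} (mul : X -> X -> X) (a b c : X) :
  inverse_semigroup mul -> is_inv mul a b -> is_inv mul a c -> b = c.
Proof.
  intros [_ Huniq] Hb Hc. destruct (Huniq a) as [d [_ Hd]].
  rewrite (Hd b Hb), (Hd c Hc). reflexivity.
Qed.

Lemma sd_add_assoc {S T : Type} (addS : S -> S -> S) (addT : T -> T -> T) :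
  associative addS -> associative addT -> associative (sd_add addS addT).
Proof.
  intros HS HT [a u] [b v] [c w]. unfold sd_add; simpl.
  rewrite HS, HT. reflexivity.
Qed.

Lemma semi_brace_aut_injective {S : Type} (add mul : S -> S -> S) (f : S -> S) :
  semi_brace_aut add mul f -> forall a b, f a = f b -> a = b.
Proof.
  intros [[g [Hg _]] _] a b Hab. rewrite <- (Hg a), <- (Hg b), Hab. reflexivity.
Qed.

Section SemidirectProduct.

Variables (S T : Type) (mulS : S -> S -> S) (mulT : T -> T -> T).
Variable sigma : T -> S -> S.

Hypothesis mulS_assoc : associative mulS.
Hypothesis mulT_assoc : associative mulT.
Hypothesis sigma_mul : forall u a b, sigma u (mulS a b) = mulS (sigma u a) (sigma u b).
Hypothesis sigma_inj : forall u a b, sigma u a = sigma u b -> a = b.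
Hypothesis sigma_hom : forall u v a, sigma (mulT u v) a = sigma u (sigma v a).

Local Notation sd := (sd_mul mulS mulT sigma).

Lemma sigma_idempotent (e : T) (a : S) : mulT e e = e -> sigma e a = a.
Proof.
  intros He. apply (sigma_inj e). rewrite <- sigma_hom, He. reflexivity.
Qed.

Lemma sigma_is_inv (u u' : T) (a : S) :
  is_inv mulT u u' -> sigma (mulT u u') a = a.
Proof. intros Hu. apply sigma_idempotent, is_inv_idempotent; assumption. Qed.

Lemma sd_mul_assoc : associative sd.
Proof.
  intros [a u] [b v] [c w]. unfold sd_mul; simpl.
  rewrite mulT_assoc, sigma_mul, sigma_hom, mulS_assoc. reflexivity.
Qed.

Lemma sd_is_inv (a a' : S) (u u' : T) :
  is_inv mulS a a' -> is_inv mulT u u' -> is_inv sd (a, u) (sigma u' a', u').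
Proof.
  intros [Ha1 Ha2] Hu. pose proof (is_inv_sym _ _ _ Hu) as Hu'.
  pose proof Hu as [Hu1 Hu2].
  unfold is_inv, sd_mul; simpl. split.
  - rewrite <- sigma_hom, !sigma_is_inv by assumption.
    rewrite Ha1, Hu1. reflexivity.
  - rewrite <- !sigma_mul, (sigma_is_inv u' u) by assumption.
    rewrite <- sigma_mul, Ha2, Hu2. reflexivity.
Qed.

Lemma sd_is_inv_components (a b : S) (u v : T) :
  is_inv sd (a, u) (b, v) -> is_inv mulT u v /\ is_inv mulS a (sigma u b).
Proof.
  unfold is_inv, sd_mul; simpl. intros [H1 H2].
  injection H1 as Ha Hu. injection H2 as Hb Hv.
  assert (Huv : is_inv mulT u v) by (split; assumption).
  rewrite (sigma_is_inv u v) in Ha by assumption.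
  rewrite (sigma_is_inv v u) in Hb by (apply is_inv_sym; assumption).
  split; [assumption | split; [assumption |]].
  transitivity (sigma u (mulS (mulS b (sigma v a)) b)); [| rewrite Hb; reflexivity].
  rewrite !sigma_mul, <- sigma_hom, sigma_is_inv by assumption. reflexivity.
Qed.

Lemma sd_inv_unique (a a' : S) (u u' : T) (p : S * T) :
  inverse_semigroup mulS -> inverse_semigroup mulT ->
  is_inv mulS a a' -> is_inv mulT u u' -> is_inv sd (a, u) p ->
  p = (sigma u' a', u').
Proof.
  intros HS HT Ha Hu. destruct p as [b v]. intros Hp.
  destruct (sd_is_inv_components _ _ _ _ Hp) as [Huv Hab].
  rewrite (inverse_semigroup_inv_unique _ _ _ _ HT Hu Huv).
  rewrite (inverse_semigroup_inv_unique _ _ _ _ HS Ha Hab).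
  rewrite <- sigma_hom, sigma_is_inv by (apply is_inv_sym; assumption).
  reflexivity.
Qed.

Lemma sd_inverse_semigroup :
  inverse_semigroup mulS -> inverse_semigroup mulT -> inverse_semigroup sd.
Proof.
  intros HS HT. split; [exact sd_mul_assoc |].
  intros [a u]. destruct (proj2 HS a) as [a' [Ha _]].
  destruct (proj2 HT u) as [u' [Hu _]].
  exists (sigma u' a', u'). split.
  - apply sd_is_inv; assumption.
  - intros p. apply sd_inv_unique; assumption.
Qed.

Variables (addS : S -> S -> S) (addT : T -> T -> T).
Hypothesis sigma_add : forall u a b, sigma u (addS a b) = addS (sigma u a) (sigma u b).

Lemma sd_brace_law :
  left_inverse_semi_brace addS mulS -> left_inverse_semi_brace addT mulT ->
  forall x x' y z, is_inv sd x x' ->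
    sd x (sd_add addS addT y z)
    = sd_add addS addT (sd x y) (sd x (sd_add addS addT x' z)).
Proof.
  intros [_ [HS braceS]] [_ [HT braceT]] [a u] x' [b v] [c w] Hx.
  destruct (proj2 HS a) as [a' [Ha _]]. destruct (proj2 HT u) as [u' [Hu _]].
  rewrite (sd_inv_unique _ _ _ _ _ HS HT Ha Hu Hx).
  unfold sd_mul, sd_add; simpl.
  rewrite !sigma_add, <- sigma_hom, sigma_is_inv by assumption.
  rewrite (braceS a a' _ _ Ha), (braceT u u' v w Hu). reflexivity.
Qed.

End SemidirectProduct.

Theorem corollary31 (S T : Type)
  (addS mulS : S -> S -> S) (addT mulT : T -> T -> T)
  (sigma : T -> S -> S)
  (HS : left_inverse_semi_brace addS mulS)
  (HT : left_inverse_semi_brace addT mulT)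
  (Haut : forall u, semi_brace_aut addS mulS (sigma u))
  (Hhom : forall u v a, sigma (mulT u v) a = sigma u (sigma v a)) :
  left_inverse_semi_brace (sd_add addS addT) (sd_mul mulS mulT sigma).
Proof.
  assert (sigma_inj : forall u a b, sigma u a = sigma u b -> a = b)
    by (intros u; exact (semi_brace_aut_injective _ _ _ (Haut u))).
  assert (sigma_add : forall u a b, sigma u (addS a b) = addS (sigma u a) (sigma u b))
    by (intros u; apply (Haut u)).
  assert (sigma_mul : forall u a b, sigma u (mulS a b) = mulS (sigma u a) (sigma u b))
    by (intros u; apply (Haut u)).
  pose proof HS as [addS_assoc [HmulS _]]. pose proof HmulS as [mulS_assoc _].
  pose proof HT as [addT_assoc [HmulT _]]. pose proof HmulT as [mulT_assoc _].
  split; [| split].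
  - apply sd_add_assoc; assumption.
  - apply sd_inverse_semigroup; assumption.
  - apply sd_brace_law; assumption.
Qed.
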